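(* Let $\alpha\in\mathbb R$, $k\in\mathbb Z$, and consider $\widehat\Delta_k=\partial_x^2-\frac{\alpha}{x}\partial_x-k^2|x|^{2\alpha}$ on $(-\infty,0)\cup(0,\infty)$ with weight $|x|^{-\alpha}$. Then the endpoints $+\infty$ and $-\infty$ are limit-point for every $k$. Regarding $0^+$ and $0^-$: (1) if $\alpha\le-3$ or $\alpha\ge1$, they are limit-point for every $k$; (2) if $-3<\alpha\le-1$, they are limit-circle for $k=0$ and limit-point for $k\ne0$; (3) if $-1<\alpha<1$, they are limit-circle for every $k$.
   Context: An endpoint $a$ of one of the intervals $(-\infty,0)$, $(0,\infty)$ (namely $-\infty,0^-,0^+,+\infty$) is limit-circle for $\widehat\Delta_k$ if every solution $u$ of $\widehat\Delta_ku=0$ on that interval belongs to $L^2(I_a,|x|^{-\alpha}dx)$ for some (equivalently any) subinterval $I_a$ of the form $(a,d)$ or $(d,a)$ with one endpoint equal to $a$; otherwise $a$ is limit-point. *)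

From Stdlib Require Import Reals ZArith.
Open Scope R_scope.

Definition negI (x : R) : Prop := x < 0.
Definition posI (x : R) : Prop := 0 < x.

Definition is_solution (alpha : R) (k : Z) (I : R -> Prop) (u : R -> R) : Prop :=
  exists u1 u2 : R -> R,
    forall x, I x ->
      derivable_pt_lim u x (u1 x) /\
      derivable_pt_lim u1 x (u2 x) /\
      u2 x - alpha / x * u1 x - (IZR k) ^ 2 * Rpower (Rabs x) (2 * alpha) * u x = 0.

(* Improper Riemann integrability of a nonnegative function f on the
   (open, convex) set J: f is Riemann integrable on every compact
   [s,t] inside J and these integrals are uniformly bounded. *)
Definition improper_integrable (f : R -> R) (J : R -> Prop) : Prop :=
  exists M : R, forall s t, J s -> J t -> s <= t ->
    exists pr : Riemann_integrable f s t, RiemannInt pr <= M.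

Definition L2w (alpha : R) (u : R -> R) (J : R -> Prop) : Prop :=
  improper_integrable (fun x => (u x) ^ 2 * Rpower (Rabs x) (- alpha)) J.

Inductive endpoint := MinusInf | ZeroMinus | ZeroPlus | PlusInf.

Definition ep_interval (e : endpoint) : R -> Prop :=
  match e with
  | MinusInf | ZeroMinus => negI
  | ZeroPlus | PlusInf => posI
  end.

Definition ep_subinterval (e : endpoint) (d : R) : R -> Prop :=
  match e with
  | MinusInf => fun x => x < d
  | ZeroMinus => fun x => d < x < 0
  | ZeroPlus => fun x => 0 < x < d
  | PlusInf => fun x => d < x
  end.

Definition limit_circle (alpha : R) (k : Z) (e : endpoint) : Prop :=
  forall u, is_solution alpha k (ep_interval e) u ->
    exists d, ep_interval e d /\ L2w alpha u (ep_subinterval e d).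

Definition limit_point (alpha : R) (k : Z) (e : endpoint) : Prop :=
  ~ limit_circle alpha k e.

From Stdlib Require Import Reals ZArith Lra Lia Psatz.
From Coquelicot Require Import Coquelicot.
Open Scope R_scope.

(* On (0,oo) take a Liouville variable s, i.e. a primitive of x^a
   (s = x^(a+1)/(a+1) if a <> -1, s = ln x if a = -1).  Then (u'/x^a)' = k^2 x^a u,
   and from this first-order system every solution is A exp(k s) + B exp(-k s)
   (k <> 0) or A + B s (k = 0), with exp(+-k s) and x^(a+1) (k = 0) explicit solutions.
   - An endpoint is limit-point as soon as one explicit solution has weighted
     square u^2 x^(-a) >= C/x near 0, resp. >= C near +oo (not integrable).
   - An endpoint is limit-circle when the representation bounds every solution's
     weighted square by C x^p near 0 with p > -1 (integrable).
   The reflection x |-> -x maps solutions to solutions and preserves the weight,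
   so 0- and -oo behave like 0+ and +oo. *)

Lemma derivable_pt_lim_congr (f g : R -> R) (x l l' : R) :
  (forall y, f y = g y) -> l = l' -> derivable_pt_lim f x l -> derivable_pt_lim g x l'.
Proof. intros Hfg <- Hf. exact (derivable_pt_lim_ext f g x l Hfg Hf). Qed.

Lemma derivable_pt_lim_const_mul (a : R) (f : R -> R) (x l : R) :
  derivable_pt_lim f x l -> derivable_pt_lim (fun y => a * f y) x (a * l).
Proof. exact (derivable_pt_lim_scal f a x l). Qed.

Lemma derivable_pt_lim_exp_comp (f : R -> R) (x l : R) :
  derivable_pt_lim f x l -> derivable_pt_lim (fun y => exp (f y)) x (exp (f x) * l).
Proof.
  intros Hf.
  exact (derivable_pt_lim_comp f exp x l (exp (f x)) Hf (derivable_pt_lim_exp _)).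
Qed.

Lemma exp_monotone (y z : R) : y <= z -> exp y <= exp z.
Proof. intros [Hlt | ->]; [left; apply exp_increasing, Hlt | right; reflexivity]. Qed.

Lemma exp_twice (z : R) : exp z ^ 2 = exp (2 * z).
Proof. replace (2 * z) with (z + z) by ring. rewrite exp_plus. ring. Qed.

Lemma Rpower_pos (x p : R) : 0 < Rpower x p.
Proof. apply exp_pos. Qed.

Lemma Rpower_minus_one (x p : R) : 0 < x -> Rpower x (p - 1) = Rpower x p / x.
Proof.
  intros Hx. unfold Rminus. rewrite Rpower_plus, Rpower_Ropp, Rpower_1 by lra. reflexivity.
Qed.

Lemma Rpower_double (x p : R) : Rpower x (2 * p) = Rpower x p * Rpower x p.
Proof. replace (2 * p) with (p + p) by ring. apply Rpower_plus. Qed.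

Lemma Rpower_sq_mul (x p q : R) : Rpower x p ^ 2 * Rpower x q = Rpower x (2 * p + q).
Proof. rewrite !Rpower_plus, Rpower_double. ring. Qed.

Lemma Rpower_antitone_exponent (x p q : R) :
  0 < x <= 1 -> p <= q -> Rpower x q <= Rpower x p.
Proof.
  intros Hx Hpq. unfold Rpower. apply exp_monotone.
  assert (ln x <= 0) by (rewrite <- ln_1; apply ln_le; lra). nra.
Qed.

Lemma inv_le_Rpower (x p : R) : 0 < x < 1 -> p <= -1 -> 1 / x <= Rpower x p.
Proof.
  intros Hx Hp. replace (1 / x) with (Rpower x (-1)).
  - apply Rpower_antitone_exponent; lra.
  - replace (-1) with (- (1)) by ring. rewrite Rpower_Ropp, Rpower_1 by lra. field. lra.
Qed.

Lemma one_le_Rpower (x p : R) : 1 <= x -> 0 <= p -> 1 <= Rpower x p.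
Proof. intros Hx Hp. rewrite <- (Rpower_O x) by lra. apply Rle_Rpower; lra. Qed.

(* z^p <= exp(p z) for z > 0 and p >= 0, since ln z <= z - 1. *)
Lemma Rpower_le_exp (z p : R) : 0 < z -> 0 <= p -> Rpower z p <= exp (p * z).
Proof.
  intros Hz Hp. apply exp_monotone.
  pose proof (exp_ineq1_le (ln z)) as Hln. rewrite exp_ln in Hln by exact Hz. nra.
Qed.

(* ln(x)^2 x <= 4 on (0,1]: with x = exp(-2w), this is w^2 <= exp(2w). *)
Lemma sq_ln_mul_le (x : R) : 0 < x <= 1 -> ln x ^ 2 * x <= 4.
Proof.
  intros Hx. set (w := - ln x / 2).
  assert (Hln : ln x <= 0) by (rewrite <- ln_1; apply ln_le; lra).
  assert (Hw : 0 <= w) by (unfold w; lra).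
  assert (Hxw : x * exp w ^ 2 = 1).
  { rewrite exp_twice, <- (exp_ln x) at 1 by lra. rewrite <- exp_plus.
    replace (ln x + 2 * w) with 0 by (unfold w; field). apply exp_0. }
  pose proof (exp_ineq1_le w).
  replace (ln x ^ 2) with (4 * w ^ 2) by (unfold w; field).
  assert (w ^ 2 <= exp w ^ 2) by nra. nra.
Qed.

Definition power_primitive (p x : R) : R := Rpower x (p + 1) / (p + 1).

Lemma power_primitive_deriv (p x : R) :
  p + 1 <> 0 -> 0 < x -> derivable_pt_lim (power_primitive p) x (Rpower x p).
Proof.
  intros Hp Hx. unfold power_primitive.
  apply (derivable_pt_lim_congr (fun y => / (p + 1) * Rpower y (p + 1)) _ x
           (/ (p + 1) * ((p + 1) * Rpower x (p + 1 - 1)))).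
  - intros y. unfold Rdiv. ring.
  - replace (p + 1 - 1) with p by ring. field. exact Hp.
  - apply derivable_pt_lim_const_mul, derivable_pt_lim_power, Hx.
Qed.

Lemma ln_deriv (x : R) : 0 < x -> derivable_pt_lim ln x (Rpower x (-1)).
Proof.
  intros Hx. replace (-1) with (- (1)) by ring. rewrite Rpower_Ropp, Rpower_1 by lra.
  apply derivable_pt_lim_ln, Hx.
Qed.

Lemma constant_on_pos (f : R -> R) : (forall x, 0 < x -> derivable_pt_lim f x 0) ->
  forall x y, 0 < x -> 0 < y -> f x = f y.
Proof.
  intros Hd.
  assert (Hlt : forall x y, 0 < x -> x < y -> f x = f y).
  { intros x y Hx Hxy. destruct (MVT_cor2 f (fun _ => 0) x y Hxy) as [c [Hc _]].
    - intros c Hc. apply Hd. lra.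
    - lra. }
  intros x y Hx Hy. destruct (Rtotal_order x y) as [Hxy | [-> | Hxy]].
  - apply Hlt; lra.
  - reflexivity.
  - symmetry. apply Hlt; lra.
Qed.

Lemma is_RInt_primitive (h F : R -> R) (s t : R) : s <= t ->
  (forall x, s <= x <= t -> derivable_pt_lim F x (h x)) ->
  (forall x, s <= x <= t -> continuity_pt h x) ->
  is_RInt h s t (F t - F s).
Proof.
  intros Hst HF Hc.
  apply (is_RInt_derive F h); intros x Hx; rewrite Rmin_left, Rmax_right in Hx by lra.
  - apply is_derive_Reals, HF, Hx.
  - apply continuity_pt_filterlim, Hc, Hx.
Qed.

Lemma RiemannInt_le_primitive (f h F : R -> R) (s t : R)
    (pr : Riemann_integrable f s t) : s <= t ->
  (forall x, s <= x <= t -> derivable_pt_lim F x (h x)) ->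
  (forall x, s <= x <= t -> continuity_pt h x) ->
  (forall x, s < x < t -> f x <= h x) -> RiemannInt pr <= F t - F s.
Proof.
  intros Hst HF Hc Hle. rewrite <- (RInt_Reals f s t pr).
  rewrite <- (is_RInt_unique h s t _ (is_RInt_primitive h F s t Hst HF Hc)).
  apply RInt_le; auto.
  - apply ex_RInt_Reals_1, pr.
  - eexists; exact (is_RInt_primitive h F s t Hst HF Hc).
Qed.

Lemma RiemannInt_ge_primitive (f h F : R -> R) (s t : R)
    (pr : Riemann_integrable f s t) : s <= t ->
  (forall x, s <= x <= t -> derivable_pt_lim F x (h x)) ->
  (forall x, s <= x <= t -> continuity_pt h x) ->
  (forall x, s < x < t -> h x <= f x) -> F t - F s <= RiemannInt pr.
Proof.
  intros Hst HF Hc Hle. rewrite <- (RInt_Reals f s t pr).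
  rewrite <- (is_RInt_unique h s t _ (is_RInt_primitive h F s t Hst HF Hc)).
  apply RInt_le; auto.
  - eexists; exact (is_RInt_primitive h F s t Hst HF Hc).
  - apply ex_RInt_Reals_1, pr.
Qed.

Definition wsq (a : R) (u : R -> R) (x : R) : R := u x ^ 2 * Rpower (Rabs x) (- a).

Lemma wsq_pos (a : R) (u : R -> R) (x : R) :
  0 < x -> wsq a u x = u x ^ 2 * Rpower x (- a).
Proof. intros Hx. unfold wsq. rewrite Rabs_right by lra. reflexivity. Qed.

Lemma wsq_continuous (a : R) (u : R -> R) (x : R) :
  x <> 0 -> continuity_pt u x -> continuity_pt (wsq a u) x.
Proof.
  intros Hx Hu.
  assert (Hw : continuity_pt (fun y => Rpower (Rabs y) (- a)) x).
  { apply (continuity_pt_comp Rabs (fun y => Rpower y (- a))); [apply Rcontinuity_abs|].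
    apply derivable_continuous_pt. eexists.
    apply derivable_pt_lim_power, Rabs_pos_lt, Hx. }
  assert (Hsq : continuity_pt (fun y => u y ^ 2) x).
  { apply (continuity_pt_comp u (fun z => z ^ 2)); [exact Hu|].
    apply derivable_continuous_pt. eexists. apply derivable_pt_lim_pow. }
  exact (continuity_pt_mult _ _ x Hsq Hw).
Qed.

Lemma L2w_near0_of_power_bound (a p C : R) (u : R -> R) :
  -1 < p -> 0 <= C ->
  (forall x, 0 < x -> continuity_pt u x) ->
  (forall x, 0 < x < 1 -> wsq a u x <= C * Rpower x p) ->
  L2w a u (ep_subinterval ZeroPlus 1).
Proof.
  intros Hp HC Hu Hbound. exists (C / (p + 1)). intros s t Hs Ht Hst. simpl in Hs, Ht.
  assert (pr : Riemann_integrable (wsq a u) s t).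
  { apply continuity_implies_RiemannInt; [lra|].
    intros x Hx. apply wsq_continuous; [lra | apply Hu; lra]. }
  exists pr.
  eapply Rle_trans.
  { apply (RiemannInt_le_primitive _ (fun y => C * Rpower y p)
             (fun y => C * power_primitive p y)); [lra | | |].
    - intros x Hx. apply derivable_pt_lim_const_mul, power_primitive_deriv; lra.
    - intros x Hx. apply derivable_continuous_pt. eexists.
      apply derivable_pt_lim_const_mul, derivable_pt_lim_power. lra.
    - intros x Hx. apply Hbound. lra. }
  assert (Ht1 : Rpower t (p + 1) <= 1).
  { rewrite <- (Rpower_O t) at 2 by lra. apply Rpower_antitone_exponent; lra. }
  pose proof (Rpower_pos s (p + 1)) as Hs0.
  assert (Hr : 0 < / (p + 1)) by (apply Rinv_0_lt_compat; lra).
  assert (0 <= C * (Rpower s (p + 1) * / (p + 1))) by (apply Rmult_le_pos; nra).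
  assert (C * (Rpower t (p + 1) * / (p + 1)) <= C * / (p + 1))
    by (apply Rmult_le_compat_l; nra).
  unfold power_primitive, Rdiv. lra.
Qed.

Lemma not_improper_integrable_near0 (f : R -> R) (C d : R) : 0 < C -> 0 < d ->
  (forall x, 0 < x < 1 -> C / x <= f x) -> ~ improper_integrable f (fun x => 0 < x < d).
Proof.
  intros HC Hd Hf [M HM].
  set (t := Rmin d 1 / 2).
  assert (Ht : 0 < t < Rmin d 1) by (unfold t; pose proof (Rmin_glb_lt d 1 0); lra).
  pose proof (Rmin_l d 1). pose proof (Rmin_r d 1).
  set (s := t * exp (- ((Rabs M + 1) / C))).
  assert (Hs : 0 < s < t).
  { assert (0 < (Rabs M + 1) / C) by (pose proof (Rabs_pos M); apply Rdiv_lt_0_compat; lra).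
    assert (exp (- ((Rabs M + 1) / C)) < 1) by (rewrite <- exp_0 at 2; apply exp_increasing; lra).
    pose proof (exp_pos (- ((Rabs M + 1) / C))). unfold s. split; nra. }
  destruct (HM s t) as [pr Hpr]; try lra.
  assert (Hlog : C * ln t - C * ln s = Rabs M + 1).
  { unfold s. rewrite ln_mult, ln_exp by (try apply exp_pos; lra). field. lra. }
  assert (Hint : C * ln t - C * ln s <= RiemannInt pr).
  { apply (RiemannInt_ge_primitive f (fun y => C / y) (fun y => C * ln y)); [lra | | |].
    - intros x Hx. apply (derivable_pt_lim_congr (fun y => C * ln y) _ x (C * / x));
        [reflexivity | reflexivity |].
      apply derivable_pt_lim_const_mul, derivable_pt_lim_ln. lra.
    - intros x Hx. apply continuity_pt_div;
        [apply continuity_pt_const; intros ? ?; reflexivity | apply continuity_pt_id | lra].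
    - intros x Hx. apply Hf. lra. }
  pose proof (Rle_abs M). lra.
Qed.

Lemma not_improper_integrable_near_infty (f : R -> R) (C d : R) : 0 < C ->
  (forall x, 1 <= x -> C <= f x) -> ~ improper_integrable f (fun x => d < x).
Proof.
  intros HC Hf [M HM].
  set (s := Rmax d 1 + 1). set (t := s + (Rabs M + 1) / C).
  pose proof (Rmax_l d 1). pose proof (Rmax_r d 1).
  assert (0 < (Rabs M + 1) / C) by (pose proof (Rabs_pos M); apply Rdiv_lt_0_compat; lra).
  assert (Hst : 1 < s <= t) by (unfold t, s; lra).
  destruct (HM s t) as [pr Hpr]; [unfold s; lra | unfold t, s; lra | lra |].
  assert (Hint : C * t - C * s <= RiemannInt pr).
  { apply (RiemannInt_ge_primitive f (fun _ => C) (fun y => C * y)); [lra | | |].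
    - intros x Hx. apply (derivable_pt_lim_congr (fun y => C * id y) _ x (C * 1));
        [reflexivity | ring |].
      apply derivable_pt_lim_const_mul, derivable_pt_lim_id.
    - intros x Hx. apply continuity_pt_const. intros ? ?; reflexivity.
    - intros x Hx. apply Hf. lra. }
  replace (C * t - C * s) with (Rabs M + 1) in Hint by (unfold t; field; lra).
  pose proof (Rle_abs M). lra.
Qed.

(* A Liouville variable is a primitive s of x^a on (0,oo); in the variable s
   the equation reads d^2u/ds^2 = k^2 u, so exp(+-k s) are solutions. *)
Lemma exp_liouville_solution (a : R) (k : Z) (s : R -> R) (c : R) :
  (forall x, 0 < x -> derivable_pt_lim s x (Rpower x a)) -> c * c = IZR k ^ 2 ->
  is_solution a k posI (fun x => exp (c * s x)).
Proof.
  intros Hs Hc.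
  assert (Hu : forall x, 0 < x ->
    derivable_pt_lim (fun y => exp (c * s y)) x (exp (c * s x) * (c * Rpower x a))).
  { intros x Hx. apply (derivable_pt_lim_exp_comp (fun y => c * s y)).
    apply derivable_pt_lim_const_mul, Hs, Hx. }
  exists (fun x => c * Rpower x a * exp (c * s x)).
  exists (fun x => c * (a * Rpower x (a - 1)) * exp (c * s x)
                   + c * Rpower x a * (exp (c * s x) * (c * Rpower x a))).
  intros x Hx. unfold posI in Hx. split; [|split].
  - eapply derivable_pt_lim_congr; [reflexivity | | apply Hu, Hx]. ring.
  - apply (derivable_pt_lim_mult (fun y => c * Rpower y a) (fun y => exp (c * s y)));
      [apply derivable_pt_lim_const_mul, derivable_pt_lim_power, Hx | apply Hu, Hx].
  - rewrite Rpower_minus_one, Rabs_right, Rpower_double by lra.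
    rewrite <- Hc. field. lra.
Qed.

Lemma power_solution (a : R) : is_solution a 0 posI (fun x => Rpower x (a + 1)).
Proof.
  exists (fun x => (a + 1) * Rpower x a), (fun x => (a + 1) * (a * Rpower x (a - 1))).
  intros x Hx. unfold posI in Hx. split; [|split].
  - eapply derivable_pt_lim_congr; [reflexivity | | apply derivable_pt_lim_power, Hx].
    replace (a + 1 - 1) with a by ring. reflexivity.
  - apply derivable_pt_lim_const_mul, derivable_pt_lim_power, Hx.
  - rewrite Rpower_minus_one by lra. simpl. field. lra.
Qed.

Lemma solution_continuous (a : R) (k : Z) (I : R -> Prop) (u : R -> R) :
  is_solution a k I u -> forall x, I x -> continuity_pt u x.
Proof.
  intros [u1 [u2 Hsol]] x Hx. apply derivable_continuous_pt.
  exists (u1 x). apply (Hsol x Hx).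
Qed.

Lemma flux_deriv (a : R) (k : Z) (u u1 u2 : R -> R) (x : R) : 0 < x ->
  derivable_pt_lim u1 x (u2 x) ->
  u2 x - a / x * u1 x - IZR k ^ 2 * Rpower (Rabs x) (2 * a) * u x = 0 ->
  derivable_pt_lim (fun y => u1 y / Rpower y a) x (IZR k ^ 2 * Rpower x a * u x).
Proof.
  intros Hx Hu1 Heq.
  pose proof (Rpower_pos x a) as Hpos.
  eapply derivable_pt_lim_congr; [reflexivity | |
    apply (derivable_pt_lim_div u1 (fun y => Rpower y a) x (u2 x) (a * Rpower x (a - 1)));
    [exact Hu1 | apply derivable_pt_lim_power, Hx | lra]].
  rewrite Rabs_right, Rpower_double in Heq by lra. rewrite Rpower_minus_one by lra.
  replace (u2 x) with (a / x * u1 x + IZR k ^ 2 * (Rpower x a * Rpower x a) * u x) by lra.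
  unfold Rsqr. field. lra.
Qed.

(* For k <> 0, every solution on (0,oo) is A exp(k s) + B exp(-k s): the
   quantities exp(c s)(c u - u'/x^a), c = +-k, are first integrals. *)
Lemma solution_representation (a : R) (k : Z) (u s : R -> R) :
  is_solution a k posI u -> (forall x, 0 < x -> derivable_pt_lim s x (Rpower x a)) ->
  k <> 0%Z ->
  exists A B, forall x, 0 < x -> u x = A * exp (IZR k * s x) + B * exp (- IZR k * s x).
Proof.
  intros [u1 [u2 Hsol]] Hs Hk.
  set (K := IZR k). set (g := fun y => u1 y / Rpower y a).
  assert (Hfirst : forall c, c * c = K ^ 2 -> forall x, 0 < x ->
     exp (c * s x) * (c * u x - g x) = exp (c * s 1) * (c * u 1 - g 1)).
  { intros c Hc x0 Hx0.
    apply (constant_on_pos (fun y => exp (c * s y) * (c * u y - g y))); [|lra..].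
    intros x Hx. destruct (Hsol x Hx) as [D1 [D2 E]].
    pose proof (Rpower_pos x a) as Hpos.
    eapply derivable_pt_lim_congr; [reflexivity | |
      apply derivable_pt_lim_mult;
      [apply (derivable_pt_lim_exp_comp (fun y => c * s y)), derivable_pt_lim_const_mul, Hs, Hx |
       apply derivable_pt_lim_minus;
       [apply derivable_pt_lim_const_mul, D1 | apply (flux_deriv a k u u1 u2 x Hx D2 E)]]].
    unfold g. fold K. rewrite <- Hc. field. lra. }
  pose proof (Hfirst K ltac:(ring)) as Hplus.
  pose proof (Hfirst (- K) ltac:(ring)) as Hminus.
  set (P := exp (K * s 1) * (K * u 1 - g 1)) in Hplus.
  set (N := exp (- K * s 1) * (- K * u 1 - g 1)) in Hminus.
  exists (- N / (2 * K)), (P / (2 * K)). intros x Hx.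
  rewrite <- (Hplus x Hx), <- (Hminus x Hx).
  assert (Hone : exp (K * s x) * exp (- K * s x) = 1).
  { rewrite <- exp_plus. replace (K * s x + - K * s x) with 0 by ring. apply exp_0. }
  transitivity (exp (K * s x) * exp (- K * s x) * u x); [rewrite Hone; ring|].
  field. apply not_0_IZR, Hk.
Qed.

(* For k = 0, every solution on (0,oo) is A + B s: the flux u'/x^a and
   u - s u'/x^a are first integrals. *)
Lemma solution_representation_0 (a : R) (u s : R -> R) :
  is_solution a 0 posI u -> (forall x, 0 < x -> derivable_pt_lim s x (Rpower x a)) ->
  exists A B, forall x, 0 < x -> u x = A + B * s x.
Proof.
  intros [u1 [u2 Hsol]] Hs.
  set (g := fun y => u1 y / Rpower y a).
  assert (Hg : forall x, 0 < x -> g x = g 1).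
  { intros x0 Hx0. apply (constant_on_pos g); [|lra..].
    intros x Hx. destruct (Hsol x Hx) as [D1 [D2 E]].
    eapply derivable_pt_lim_congr; [reflexivity | | apply (flux_deriv a 0 u u1 u2 x Hx D2 E)].
    simpl. ring. }
  assert (Hr : forall x, 0 < x -> u x - s x * g x = u 1 - s 1 * g 1).
  { intros x0 Hx0. apply (constant_on_pos (fun y => u y - s y * g y)); [|lra..].
    intros x Hx. destruct (Hsol x Hx) as [D1 [D2 E]].
    pose proof (Rpower_pos x a) as Hpos.
    eapply derivable_pt_lim_congr; [reflexivity | |
      apply derivable_pt_lim_minus;
      [exact D1 | apply derivable_pt_lim_mult;
                  [apply Hs, Hx | apply (flux_deriv a 0 u u1 u2 x Hx D2 E)]]].
    unfold g. simpl. field. lra. }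
  exists (u 1 - s 1 * g 1), (g 1). intros x Hx. rewrite <- (Hr x Hx), (Hg x Hx). ring.
Qed.

(* For a > -1 the Liouville variable s = x^(a+1)/(a+1) is bounded on
   (0,1), hence so is every solution A + B s or A exp(k s) + B exp(-k s). *)
Lemma solutions_bounded_near0 (a : R) (k : Z) (u : R -> R) :
  -1 < a -> is_solution a k posI u ->
  exists K, forall x, 0 < x < 1 -> Rabs (u x) <= K.
Proof.
  intros Ha Hu.
  assert (Hs : forall x, 0 < x < 1 -> 0 <= power_primitive a x <= 1 / (a + 1)).
  { intros x Hx. unfold power_primitive.
    assert (Rpower x (a + 1) <= 1).
    { rewrite <- (Rpower_O x) at 2 by lra. apply Rpower_antitone_exponent; lra. }
    pose proof (Rpower_pos x (a + 1)).
    split; [apply Rlt_le, Rdiv_lt_0_compat; lra|].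
    apply Rmult_le_compat_r; [apply Rlt_le, Rinv_0_lt_compat|]; lra. }
  assert (Hderiv : forall x, 0 < x -> derivable_pt_lim (power_primitive a) x (Rpower x a))
    by (intros; apply power_primitive_deriv; lra).
  destruct (Z.eq_dec k 0) as [-> | Hk].
  - destruct (solution_representation_0 a u _ Hu Hderiv) as [A [B HAB]].
    exists (Rabs A + Rabs B * (1 / (a + 1))). intros x Hx.
    rewrite HAB by lra. specialize (Hs x Hx).
    eapply Rle_trans; [apply Rabs_triang|].
    rewrite Rabs_mult, (Rabs_right (power_primitive a x)) by lra.
    pose proof (Rabs_pos B). nra.
  - destruct (solution_representation a k u _ Hu Hderiv Hk) as [A [B HAB]].
    set (E := exp (Rabs (IZR k) * (1 / (a + 1)))).
    exists (Rabs A * E + Rabs B * E). intros x Hx.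
    rewrite HAB by lra. specialize (Hs x Hx).
    pose proof (Rabs_pos (IZR k)). pose proof (Rle_abs (IZR k)).
    pose proof (Rle_abs (- IZR k)) as Hopp. rewrite Rabs_Ropp in Hopp.
    assert (E1 : exp (IZR k * power_primitive a x) <= E) by (apply exp_monotone; nra).
    assert (E2 : exp (- IZR k * power_primitive a x) <= E) by (apply exp_monotone; nra).
    eapply Rle_trans; [apply Rabs_triang|].
    rewrite !Rabs_mult, !(Rabs_right (exp _)) by (left; apply exp_pos).
    pose proof (Rabs_pos A). pose proof (Rabs_pos B). nra.
Qed.

Lemma limit_point_zero_of_lower_bound (a : R) (k : Z) (u : R -> R) (C : R) :
  is_solution a k posI u -> 0 < C ->
  (forall x, 0 < x < 1 -> C / x <= wsq a u x) -> limit_point a k ZeroPlus.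
Proof.
  intros Hu HC Hbound Hlc. destruct (Hlc u Hu) as [d [Hd HL]].
  exact (not_improper_integrable_near0 (wsq a u) C d HC Hd Hbound HL).
Qed.

Lemma limit_point_infty_of_lower_bound (a : R) (k : Z) (u : R -> R) (C : R) :
  is_solution a k posI u -> 0 < C ->
  (forall x, 1 <= x -> C <= wsq a u x) -> limit_point a k PlusInf.
Proof.
  intros Hu HC Hbound Hlc. destruct (Hlc u Hu) as [d [Hd HL]].
  exact (not_improper_integrable_near_infty (wsq a u) C d HC Hbound HL).
Qed.

Definition mirror (e : endpoint) : endpoint :=
  match e with
  | MinusInf => PlusInf
  | ZeroMinus => ZeroPlus
  | ZeroPlus => ZeroMinus
  | PlusInf => MinusInf
  end.

Lemma mirror_involutive (e : endpoint) : mirror (mirror e) = e.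
Proof. destruct e; reflexivity. Qed.

Lemma ep_interval_mirror (e : endpoint) (y : R) :
  ep_interval e y -> ep_interval (mirror e) (- y) /\ y <> 0.
Proof. destruct e; simpl; unfold negI, posI; lra. Qed.

Lemma ep_subinterval_mirror (e : endpoint) (d y : R) :
  ep_subinterval (mirror e) (- d) y -> ep_subinterval e d (- y).
Proof. destruct e; simpl; lra. Qed.

(* The equation only involves x through a/x and |x|, so it is invariant
   under the reflection. *)
Lemma solution_reflect (a : R) (k : Z) (I J : R -> Prop) (u : R -> R) :
  (forall y, J y -> I (- y) /\ y <> 0) ->
  is_solution a k I u -> is_solution a k J (fun y => u (- y)).
Proof.
  intros HJ [u1 [u2 Hsol]].
  assert (Hrefl : forall f x l, derivable_pt_lim f (- x) l ->
                    derivable_pt_lim (fun y => f (- y)) x (- l)).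
  { intros f x l Hf. replace (- l) with (l * -1) by ring.
    apply (derivable_pt_lim_comp (fun y => - y) f x (-1) l); [|exact Hf].
    apply (derivable_pt_lim_opp id x 1), derivable_pt_lim_id. }
  exists (fun y => - u1 (- y)), (fun y => u2 (- y)).
  intros y Hy. destruct (HJ y Hy) as [HI Hy0]. destruct (Hsol (- y) HI) as [D1 [D2 E]].
  split; [|split].
  - apply Hrefl, D1.
  - rewrite <- (Ropp_involutive (u2 (- y))).
    apply (Hrefl (fun z => - u1 z)), derivable_pt_lim_opp, D2.
  - rewrite Rabs_Ropp in E. rewrite <- E. field. exact Hy0.
Qed.

(* The weight |x|^(-a) is even, so the reflection preserves L2w. *)
Lemma L2w_reflect (a : R) (u v : R -> R) (J J' : R -> Prop) :
  (forall y, J' y -> J (- y)) -> (forall y, v y = u (- y)) ->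
  L2w a u J -> L2w a v J'.
Proof.
  intros HJ Hv [M HM]. exists M. intros s t Hs Ht Hst.
  destruct (HM (- t) (- s) (HJ t Ht) (HJ s Hs) ltac:(lra)) as [pr Hpr].
  assert (Hu : is_RInt (wsq a u) (- t) (- s) (RiemannInt pr)).
  { rewrite <- (RInt_Reals _ _ _ pr). apply (@RInt_correct R_CompleteNormedModule).
    apply ex_RInt_Reals_1, pr. }
  assert (Hv' : is_RInt (wsq a v) s t (RiemannInt pr)).
  { apply (@is_RInt_swap R_CompleteNormedModule) in Hu.
    apply (@is_RInt_comp_opp R_CompleteNormedModule) in Hu.
    apply (@is_RInt_opp R_CompleteNormedModule) in Hu.
    rewrite opp_opp in Hu. eapply is_RInt_ext; [|exact Hu].
    intros x _. unfold wsq. rewrite opp_opp, Hv, <- (Rabs_Ropp x). reflexivity. }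
  exists (ex_RInt_Reals_0 _ _ _ (ex_intro _ _ Hv')).
  rewrite <- RInt_Reals. erewrite is_RInt_unique; [exact Hpr | exact Hv'].
Qed.

Lemma limit_circle_mirror (a : R) (k : Z) (e : endpoint) :
  limit_circle a k e -> limit_circle a k (mirror e).
Proof.
  intros Hlc u Hu.
  destruct (Hlc (fun y => u (- y))) as [d [Hd HL]].
  { apply (solution_reflect a k (ep_interval (mirror e))); [|exact Hu].
    apply ep_interval_mirror. }
  exists (- d). split; [apply ep_interval_mirror, Hd|].
  apply (L2w_reflect a (fun y => u (- y)) u (ep_subinterval e d)).
  - apply ep_subinterval_mirror.
  - intros y. rewrite Ropp_involutive. reflexivity.
  - exact HL.
Qed.

Lemma limit_point_mirror (a : R) (k : Z) (e : endpoint) :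
  limit_point a k e -> limit_point a k (mirror e).
Proof.
  intros Hlp Hm. apply Hlp. rewrite <- (mirror_involutive e). apply limit_circle_mirror, Hm.
Qed.

Lemma abs_IZR_sq (k : Z) : Rabs (IZR k) * Rabs (IZR k) = IZR k ^ 2.
Proof. rewrite <- Rabs_mult, Rabs_right; [ring | nra]. Qed.

Lemma abs_IZR_ge1 (k : Z) : k <> 0%Z -> 1 <= Rabs (IZR k).
Proof. intros Hk. rewrite Rabs_Zabs. apply IZR_le. lia. Qed.

(* Limit-point at 0+ for a >= 1: the solution exp(|k| s) is >= 1 and the
   weight x^(-a) already dominates 1/x. *)
Lemma limit_point_zero_large (a : R) (k : Z) : 1 <= a -> limit_point a k ZeroPlus.
Proof.
  intros Ha. set (c := Rabs (IZR k)).
  apply (limit_point_zero_of_lower_bound a k (fun x => exp (c * power_primitive a x)) 1);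
    [| lra |].
  { apply exp_liouville_solution; [intros; apply power_primitive_deriv; lra | apply abs_IZR_sq]. }
  intros x Hx. rewrite wsq_pos by lra.
  assert (Hexp : 1 <= exp (c * power_primitive a x) ^ 2).
  { rewrite exp_twice, <- exp_0. apply exp_monotone. unfold power_primitive.
    apply Rmult_le_pos; [lra|]. apply Rmult_le_pos; [apply Rabs_pos|].
    apply Rlt_le, Rdiv_lt_0_compat; [apply Rpower_pos | lra]. }
  pose proof (inv_le_Rpower x (- a) Hx ltac:(lra)) as Hweight.
  pose proof (Rpower_pos x (- a)). nra.
Qed.

Lemma limit_point_zero_very_negative (a : R) : a <= -3 -> limit_point a 0 ZeroPlus.
Proof.
  intros Ha.
  apply (limit_point_zero_of_lower_bound a 0 (fun x => Rpower x (a + 1)) 1);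
    [apply power_solution | lra |].
  intros x Hx. rewrite wsq_pos, Rpower_sq_mul by lra.
  apply inv_le_Rpower; lra.
Qed.

(* Limit-point at 0+ for a = -1, k <> 0: the solution x^(-|k|). *)
Lemma limit_point_zero_log (k : Z) : k <> 0%Z -> limit_point (-1) k ZeroPlus.
Proof.
  intros Hk. set (c := Rabs (IZR k)). pose proof (abs_IZR_ge1 k Hk) as Hc. fold c in Hc.
  apply (limit_point_zero_of_lower_bound (-1) k (fun x => exp (- c * ln x)) 1); [| lra |].
  { apply exp_liouville_solution; [exact ln_deriv | rewrite <- abs_IZR_sq; fold c; ring]. }
  intros x Hx. rewrite wsq_pos by lra. change (1 / x <= Rpower x (- c) ^ 2 * Rpower x (- -1)).
  rewrite Rpower_sq_mul. apply inv_le_Rpower; lra.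
Qed.

(* Limit-point at 0+ for a < -1, k <> 0: the
   solution exp(-|k| s) blows up faster than any power, since s -> -oo. *)
Lemma limit_point_zero_negative (a : R) (k : Z) :
  a < -1 -> k <> 0%Z -> limit_point a k ZeroPlus.
Proof.
  intros Ha Hk. set (c := Rabs (IZR k)). pose proof (abs_IZR_ge1 k Hk) as Hc. fold c in Hc.
  set (p := (1 - a) / (- (a + 1))). set (c0 := 2 * c / (1 - a)).
  assert (Hp : 0 < p) by (apply Rdiv_lt_0_compat; lra).
  assert (Hc0 : 0 < c0) by (apply Rdiv_lt_0_compat; lra).
  apply (limit_point_zero_of_lower_bound a k (fun x => exp (- c * power_primitive a x))
           (Rpower c0 p)); [| apply Rpower_pos |].
  { apply exp_liouville_solution; [intros; apply power_primitive_deriv; lra|].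
    rewrite <- abs_IZR_sq. fold c. ring. }
  intros x Hx. rewrite wsq_pos, exp_twice by lra.
  set (z := c0 * Rpower x (a + 1)).
  assert (Hz : 0 < z) by (apply Rmult_lt_0_compat; [exact Hc0 | apply Rpower_pos]).
  assert (Hexp : 2 * (- c * power_primitive a x) = p * z)
    by (unfold z, c0, p, power_primitive; field; lra).
  assert (Hpow : Rpower z p * Rpower x (- a) = Rpower c0 p / x).
  { unfold z. rewrite <- Rpower_mult_distr, Rpower_mult, Rmult_assoc, <- Rpower_plus
      by (try apply Rpower_pos; lra).
    replace ((a + 1) * p + - a) with (- (1)) by (unfold p; field; lra).
    rewrite Rpower_Ropp, Rpower_1 by lra. reflexivity. }
  rewrite Hexp, <- Hpow. apply Rmult_le_compat_r; [apply Rlt_le, Rpower_pos|].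
  apply Rpower_le_exp; lra.
Qed.

(* Limit-point at +oo, a < -1: s increases to 0, so exp(|k| s) stays above
   exp(|k|/(a+1)), and the weight x^(-a) is >= 1. *)
Lemma limit_point_infty_negative (a : R) (k : Z) : a < -1 -> limit_point a k PlusInf.
Proof.
  intros Ha. set (c := Rabs (IZR k)). pose proof (Rabs_pos (IZR k)) as Hc. fold c in Hc.
  apply (limit_point_infty_of_lower_bound a k (fun x => exp (c * power_primitive a x))
           (exp (2 * c / (a + 1)))); [| apply exp_pos |].
  { apply exp_liouville_solution; [intros; apply power_primitive_deriv; lra | apply abs_IZR_sq]. }
  intros x Hx. rewrite wsq_pos, exp_twice by lra.
  assert (Hs : 2 * c / (a + 1) <= 2 * (c * power_primitive a x)).
  { assert (Hx1 : Rpower x (a + 1) <= 1).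
    { rewrite <- (Rpower_O x) at 2 by lra. apply Rle_Rpower; lra. }
    assert (Hinv : / (a + 1) < 0) by (apply Rinv_lt_0_compat; lra).
    assert (0 <= c * - / (a + 1)) by nra.
    unfold power_primitive, Rdiv. nra. }
  pose proof (one_le_Rpower x (- a) Hx ltac:(lra)).
  pose proof (exp_monotone _ _ Hs). pose proof (exp_pos (2 * c / (a + 1))). nra.
Qed.

(* Limit-point at +oo, a = -1: the solution x^|k| (the constant 1 if k = 0). *)
Lemma limit_point_infty_log (k : Z) : limit_point (-1) k PlusInf.
Proof.
  set (c := Rabs (IZR k)). pose proof (Rabs_pos (IZR k)) as Hc. fold c in Hc.
  apply (limit_point_infty_of_lower_bound (-1) k (fun x => exp (c * ln x)) 1); [| lra |].
  { apply exp_liouville_solution; [exact ln_deriv | apply abs_IZR_sq]. }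
  intros x Hx. rewrite wsq_pos by lra. change (1 <= Rpower x c ^ 2 * Rpower x (- -1)).
  rewrite Rpower_sq_mul. apply one_le_Rpower; lra.
Qed.

Lemma limit_point_infty_positive_0 (a : R) : -1 < a -> limit_point a 0 PlusInf.
Proof.
  intros Ha.
  apply (limit_point_infty_of_lower_bound a 0 (fun x => Rpower x (a + 1)) 1);
    [apply power_solution | lra |].
  intros x Hx. rewrite wsq_pos, Rpower_sq_mul by lra. apply one_le_Rpower; lra.
Qed.

(* Limit-point at +oo, a > -1, k <> 0: exp(|k| s)^2 >= 2|k| s, and
   s x^(-a) = x/(a+1). *)
Lemma limit_point_infty_positive (a : R) (k : Z) :
  -1 < a -> k <> 0%Z -> limit_point a k PlusInf.
Proof.
  intros Ha Hk. set (c := Rabs (IZR k)). pose proof (abs_IZR_ge1 k Hk) as Hc. fold c in Hc.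
  apply (limit_point_infty_of_lower_bound a k (fun x => exp (c * power_primitive a x))
           (2 * c / (a + 1))); [| apply Rdiv_lt_0_compat; lra |].
  { apply exp_liouville_solution; [intros; apply power_primitive_deriv; lra | apply abs_IZR_sq]. }
  intros x Hx. rewrite wsq_pos, exp_twice by lra.
  set (z := 2 * (c * power_primitive a x)).
  assert (Hz : z * Rpower x (- a) = 2 * c / (a + 1) * x).
  { assert (Hx1 : Rpower x (a + 1) * Rpower x (- a) = x).
    { rewrite <- Rpower_plus. replace (a + 1 + - a) with 1 by ring. apply Rpower_1. lra. }
    unfold z, power_primitive.
    transitivity (2 * c / (a + 1) * (Rpower x (a + 1) * Rpower x (- a))); [field; lra|].
    rewrite Hx1. reflexivity. }
  assert (Hz0 : 0 <= z).
  { unfold z, power_primitive.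
    apply Rmult_le_pos; [lra|]. apply Rmult_le_pos; [lra|].
    apply Rlt_le, Rdiv_lt_0_compat; [apply Rpower_pos | lra]. }
  pose proof (exp_ineq1_le z). pose proof (Rpower_pos x (- a)).
  assert (0 < 2 * c / (a + 1)) by (apply Rdiv_lt_0_compat; lra). nra.
Qed.

Lemma limit_point_plus_infty (a : R) (k : Z) : limit_point a k PlusInf.
Proof.
  destruct (Rtotal_order a (-1)) as [Ha | [-> | Ha]].
  - apply limit_point_infty_negative, Ha.
  - apply limit_point_infty_log.
  - destruct (Z.eq_dec k 0) as [-> | Hk].
    + apply limit_point_infty_positive_0, Ha.
    + apply limit_point_infty_positive; assumption.
Qed.

(* Limit-circle at 0+ for -1 < a < 1: bounded solutions against the
   integrable weight x^(-a). *)
Lemma limit_circle_zero_small (a : R) (k : Z) : -1 < a < 1 -> limit_circle a k ZeroPlus.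
Proof.
  intros Ha u Hu. exists 1. split; [unfold ep_interval, posI; lra|].
  destruct (solutions_bounded_near0 a k u (proj1 Ha) Hu) as [K HK].
  apply (L2w_near0_of_power_bound a (- a) (K ^ 2) u); [lra | apply pow2_ge_0 |
    exact (solution_continuous a k posI u Hu) |].
  intros x Hx. rewrite wsq_pos by lra. specialize (HK x Hx).
  pose proof (Rabs_pos (u x)). rewrite <- (pow2_abs (u x)).
  apply Rmult_le_compat_r; [apply Rlt_le, Rpower_pos | nra].
Qed.

(* Limit-circle at 0+ for -3 < a < -1, k = 0: (A + B s)^2 x^(-a) is
   dominated by x^(a+2), which is integrable since a + 2 > -1. *)
Lemma limit_circle_zero_negative_0 (a : R) : -3 < a < -1 -> limit_circle a 0 ZeroPlus.
Proof.
  intros Ha u Hu. exists 1. split; [unfold ep_interval, posI; lra|].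
  destruct (solution_representation_0 a u (power_primitive a) Hu) as [A [B HAB]].
  { intros; apply power_primitive_deriv; lra. }
  set (B' := B / (a + 1)).
  apply (L2w_near0_of_power_bound a (a + 2) (2 * A ^ 2 + 2 * B' ^ 2) u);
    [lra | nra | exact (solution_continuous a 0 posI u Hu) |].
  intros x Hx. rewrite wsq_pos, HAB by lra.
  set (y := Rpower x (a + 1)).
  replace (A + B * power_primitive a x) with (A + B' * y)
    by (unfold B', y, power_primitive; field; lra).
  assert (Hy : y ^ 2 * Rpower x (- a) = Rpower x (a + 2))
    by (unfold y; rewrite Rpower_sq_mul; f_equal; ring).
  assert (Hw : Rpower x (- a) <= Rpower x (a + 2)) by (apply Rpower_antitone_exponent; lra).
  pose proof (Rpower_pos x (- a)).
  assert (Hsq : (A + B' * y) ^ 2 <= 2 * A ^ 2 + 2 * B' ^ 2 * y ^ 2)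
    by (pose proof (pow2_ge_0 (A - B' * y)); nra).
  apply Rle_trans with ((2 * A ^ 2 + 2 * B' ^ 2 * y ^ 2) * Rpower x (- a));
    [apply Rmult_le_compat_r; lra|].
  replace ((2 * A ^ 2 + 2 * B' ^ 2 * y ^ 2) * Rpower x (- a))
    with (2 * A ^ 2 * Rpower x (- a) + 2 * B' ^ 2 * Rpower x (a + 2)) by (rewrite <- Hy; ring).
  pose proof (pow2_ge_0 A). nra.
Qed.

(* Limit-circle at 0+ for a = -1, k = 0: (A + B ln x)^2 x is bounded. *)
Lemma limit_circle_zero_log_0 : limit_circle (-1) 0 ZeroPlus.
Proof.
  intros u Hu. exists 1. split; [unfold ep_interval, posI; lra|].
  destruct (solution_representation_0 (-1) u ln Hu ln_deriv) as [A [B HAB]].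
  apply (L2w_near0_of_power_bound (-1) 0 (2 * A ^ 2 + 8 * B ^ 2) u);
    [lra | nra | exact (solution_continuous (-1) 0 posI u Hu) |].
  intros x Hx. rewrite wsq_pos, HAB, Rpower_O by lra.
  replace (Rpower x (- -1)) with x
    by (replace (- -1) with 1 by ring; rewrite Rpower_1; lra).
  pose proof (sq_ln_mul_le x ltac:(lra)).
  assert ((A + B * ln x) ^ 2 <= 2 * A ^ 2 + 2 * B ^ 2 * ln x ^ 2)
    by (pose proof (pow2_ge_0 (A - B * ln x)); nra).
  pose proof (pow2_ge_0 A). pose proof (pow2_ge_0 B). nra.
Qed.

Lemma limit_point_zero_both (a : R) (k : Z) :
  limit_point a k ZeroPlus -> limit_point a k ZeroPlus /\ limit_point a k ZeroMinus.
Proof. intros Hlp. split; [exact Hlp | exact (limit_point_mirror a k ZeroPlus Hlp)]. Qed.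

Lemma limit_circle_zero_both (a : R) (k : Z) :
  limit_circle a k ZeroPlus -> limit_circle a k ZeroPlus /\ limit_circle a k ZeroMinus.
Proof. intros Hlc. split; [exact Hlc | exact (limit_circle_mirror a k ZeroPlus Hlc)]. Qed.

Theorem mainTheorem7 (alpha : R) :
  (forall k : Z, limit_point alpha k PlusInf /\ limit_point alpha k MinusInf) /\
  ((alpha <= -3 \/ 1 <= alpha) ->
     forall k : Z, limit_point alpha k ZeroPlus /\ limit_point alpha k ZeroMinus) /\
  ((-3 < alpha <= -1) ->
     (limit_circle alpha 0%Z ZeroPlus /\ limit_circle alpha 0%Z ZeroMinus) /\
     (forall k : Z, k <> 0%Z ->
        limit_point alpha k ZeroPlus /\ limit_point alpha k ZeroMinus)) /\
  ((-1 < alpha < 1) ->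
     forall k : Z, limit_circle alpha k ZeroPlus /\ limit_circle alpha k ZeroMinus).
Proof.
  split; [|split; [|split]].
  - intros k. split; [apply limit_point_plus_infty|].
    exact (limit_point_mirror alpha k PlusInf (limit_point_plus_infty alpha k)).
  - intros Ha k. apply limit_point_zero_both. destruct Ha as [Ha | Ha].
    + destruct (Z.eq_dec k 0) as [-> | Hk].
      * apply limit_point_zero_very_negative, Ha.
      * apply limit_point_zero_negative; [lra | exact Hk].
    + apply limit_point_zero_large, Ha.
  - intros [Ha3 Ha1]. split.
    + apply limit_circle_zero_both. destruct (Rle_lt_or_eq_dec _ _ Ha1) as [Ha | ->].
      * apply limit_circle_zero_negative_0; lra.
      * apply limit_circle_zero_log_0.
    + intros k Hk. apply limit_point_zero_both. destruct (Rle_lt_or_eq_dec _ _ Ha1) as [Ha | ->].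
      * apply limit_point_zero_negative; assumption.
      * apply limit_point_zero_log, Hk.
  - intros Ha k. apply limit_circle_zero_both, limit_circle_zero_small, Ha.
Qed.
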